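(* Let $T$ be a sound arithmetical theory. Then $\mathrm{SA}_{L(T)} + T + \mathrm{IND}(\mathit{sk}^\omega(L(T))) \sqsubseteq_{L(T)} \mathrm{Tr}(L(T))$, i.e. every $L(T)$ sentence provable in $\mathrm{SA}_{L(T)} + T + \mathrm{IND}(\mathit{sk}^\omega(L(T)))$ is true in $\mathbb{N}$.
   Context: An arithmetical language contains $0/0$, $s/1$ and possibly symbols for primitive recursive functions, interpreted naturally in the structure $\mathbb{N}$; an arithmetical theory $T$ is sound if $\mathbb{N}\models T$. $\mathrm{Tr}(L(T))$ is the set of $L(T)$ sentences true in $\mathbb{N}$. $T_1\sqsubseteq_{L} T_2$ means $T_2$ proves every $L$ formula that $T_1$ proves. Skolem symbols $\mathfrak{s}_{Qx\varphi}$ (a new function symbol of arity $|\mathrm{FV}(Qx\varphi)|$ for each formula $Qx\varphi$, $Q\in\{\forall,\exists\}$), $\mathit{sk}^\omega(L)$ is the closure of $L$ under adding these symbols. $\mathrm{SA}_L$: universal closures of $\exists x\varphi(x,\vec y)\to\varphi(\mathfrak{s}_{\exists x\varphi}(\vec y),\vec y)$ and $\varphi(\mathfrak{s}_{\forall x\varphi}(\vec y),\vec y)\to\forall x\varphi(x,\vec y)$ for all $\mathit{sk}^\omega(L)$ formulas $\varphi$. $I_x\varphi=\forall\vec z(\varphi(0,\vec z)\wedge\forall x(\varphi(x,\vec z)\to\varphi(s(x),\vec z))\to\forall x\varphi(x,\vec z))$; $\mathrm{IND}(L')=\{I_x\varphi:\varphi$ an $L'$ formula$\}$. *)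

From Stdlib Require Import List Arith Lia.
Import ListNotations.

(* Primitive recursive function codes (symbols of an arithmetical      *)
(* language), with their natural interpretation in N.                   *)
Inductive PR : Type :=
| PZero : PR
| PSucc : PR
| PProj : nat -> nat -> PR             (* PProj n i : projection on i-th of n args *)
| PComp : nat -> PR -> list PR -> PR   (* PComp m f gs : f(g1..gk), arity m *)
| PRec  : PR -> PR -> PR.              (* primitive recursion on first argument *)

Fixpoint pr_arity (c : PR) : nat :=
  match c with
  | PZero => 0
  | PSucc => 1
  | PProj n _ => n
  | PComp m _ _ => m
  | PRec g _ => S (pr_arity g)
  end.

Fixpoint pr_wf (c : PR) : Prop :=
  match c with
  | PZero => True
  | PSucc => True
  | PProj n i => i < n
  | PComp m f gs =>
      pr_wf f /\ pr_arity f = length gs /\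
      (fix go (l : list PR) : Prop :=
         match l with nil => True | g :: l' => (pr_wf g /\ pr_arity g = m) /\ go l' end) gs
  | PRec g h => pr_wf g /\ pr_wf h /\ pr_arity h = S (S (pr_arity g))
  end.

Fixpoint pr_eval (c : PR) (v : list nat) : nat :=
  match c with
  | PZero => 0
  | PSucc => S (hd 0 v)
  | PProj _ i => nth i v 0
  | PComp _ f gs => pr_eval f (map (fun g => pr_eval g v) gs)
  | PRec g h =>
      match v with
      | nil => pr_eval g nil
      | x :: ys => nat_rect (fun _ => nat) (pr_eval g ys)
                     (fun k r => pr_eval h (k :: r :: ys)) x
      end
  end.

Definition arith_lang (L : PR -> Prop) : Prop :=
  L PZero /\ L PSucc /\ (forall c, L c -> pr_wf c).

(*   SkEx phi  is the Skolem symbol s_{exists x phi}                     *)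
(*   SkAll phi is the Skolem symbol s_{forall x phi}                     *)
(* (in phi, the bound variable x is de Bruijn index 0).                 *)
Inductive sym : Type :=
| Base  : PR -> sym
| SkEx  : form -> sym
| SkAll : form -> sym
with term : Type :=
| tvar : nat -> term
| tapp : sym -> list term -> term
with form : Type :=
| Ffal : form
| Feq  : term -> term -> form
| Fimp : form -> form -> form
| Fand : form -> form -> form
| For  : form -> form -> form
| Fall : form -> form
| Fex  : form -> form.

Definition tzero : term := tapp (Base PZero) nil.
Definition tsucc (t : term) : term := tapp (Base PSucc) [t].

Fixpoint fv_term (t : term) : list nat :=
  match t with
  | tvar n => [n]
  | tapp _ args =>
      (fix go (l : list term) : list nat :=
         match l with nil => nil | u :: l' => fv_term u ++ go l' end) args
  end.

Fixpoint fv_form (phi : form) : list nat :=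
  match phi with
  | Ffal => nil
  | Feq s t => fv_term s ++ fv_term t
  | Fimp a b | Fand a b | For a b => fv_form a ++ fv_form b
  | Fall a | Fex a => map pred (filter (fun n => 0 <? n) (fv_form a))
  end.

(* sorted, duplicate-free list of the free variables *)
Definition canon (l : list nat) : list nat :=
  filter (fun n => existsb (Nat.eqb n) l) (seq 0 (S (list_max l))).
Definition fvs (phi : form) : list nat := canon (fv_form phi).

Definition closed (phi : form) : Prop := fv_form phi = nil.

Definition sym_arity (f : sym) : nat :=
  match f with
  | Base c => pr_arity c
  | SkEx phi => length (fvs (Fex phi))
  | SkAll phi => length (fvs (Fall phi))
  end.

Fixpoint subst_term (sg : nat -> term) (t : term) : term :=
  match t with
  | tvar n => sg n
  | tapp f args => tapp f (map (subst_term sg) args)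
  end.

Definition shift_term (t : term) : term := subst_term (fun n => tvar (S n)) t.
Definition up (sg : nat -> term) : nat -> term :=
  fun n => match n with 0 => tvar 0 | S m => shift_term (sg m) end.

Fixpoint subst_form (sg : nat -> term) (phi : form) : form :=
  match phi with
  | Ffal => Ffal
  | Feq s t => Feq (subst_term sg s) (subst_term sg t)
  | Fimp a b => Fimp (subst_form sg a) (subst_form sg b)
  | Fand a b => Fand (subst_form sg a) (subst_form sg b)
  | For a b => For (subst_form sg a) (subst_form sg b)
  | Fall a => Fall (subst_form (up sg) a)
  | Fex a => Fex (subst_form (up sg) a)
  end.

Definition scons (t : term) (sg : nat -> term) : nat -> term :=
  fun n => match n with 0 => t | S m => sg m end.
(* phi[t/0], lowering the other free indices by one *)
Definition inst (phi : form) (t : term) : form := subst_form (scons t tvar) phi.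
Definition shift_form (phi : form) : form := subst_form (fun n => tvar (S n)) phi.

(* Languages: sk = false gives L, sk = true gives sk^omega(L).         *)
Fixpoint wf_sym (sk : bool) (L : PR -> Prop) (f : sym) : Prop :=
  match f with
  | Base c => L c
  | SkEx phi => sk = true /\ wf_form sk L phi
  | SkAll phi => sk = true /\ wf_form sk L phi
  end
with wf_term (sk : bool) (L : PR -> Prop) (t : term) : Prop :=
  match t with
  | tvar _ => True
  | tapp f args =>
      wf_sym sk L f /\ length args = sym_arity f /\
      (fix go (l : list term) : Prop :=
         match l with nil => True | u :: l' => wf_term sk L u /\ go l' end) args
  end
with wf_form (sk : bool) (L : PR -> Prop) (phi : form) : Prop :=
  match phi with
  | Ffal => True
  | Feq s t => wf_term sk L s /\ wf_term sk L t
  | Fimp a b | Fand a b | For a b => wf_form sk L a /\ wf_form sk L b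
  | Fall a | Fex a => wf_form sk L a
  end.

Definition L_formula (L : PR -> Prop) (phi : form) : Prop := wf_form false L phi.
Definition skw_formula (L : PR -> Prop) (phi : form) : Prop := wf_form true L phi.
Definition L_sentence (L : PR -> Prop) (phi : form) : Prop :=
  L_formula L phi /\ closed phi.

(* Semantics in the standard model N (only used for L-formulas, where   *)
(* no Skolem symbol occurs; Skolem symbols get a dummy value).          *)
Fixpoint eval_term (rho : nat -> nat) (t : term) : nat :=
  match t with
  | tvar n => rho n
  | tapp (Base c) args => pr_eval c (map (eval_term rho) args)
  | tapp _ _ => 0
  end.

Definition ncons (a : nat) (rho : nat -> nat) : nat -> nat :=
  fun n => match n with 0 => a | S m => rho m end.

Fixpoint sat (rho : nat -> nat) (phi : form) : Prop :=
  match phi with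
  | Ffal => False
  | Feq s t => eval_term rho s = eval_term rho t
  | Fimp a b => sat rho a -> sat rho b
  | Fand a b => sat rho a /\ sat rho b
  | For a b => sat rho a \/ sat rho b
  | Fall a => forall x : nat, sat (ncons x rho) a
  | Fex a => exists x : nat, sat (ncons x rho) a
  end.

Definition true_in_N (phi : form) : Prop := sat (fun _ => 0) phi.

Definition Tr (L : PR -> Prop) (phi : form) : Prop := L_sentence L phi /\ true_in_N phi.

Definition sound (T : form -> Prop) : Prop := forall phi, T phi -> true_in_N phi.

Inductive prv : list form -> form -> Prop :=
| P_ax Γ phi : In phi Γ -> prv Γ phi
| P_impI Γ a b : prv (a :: Γ) b -> prv Γ (Fimp a b)
| P_impE Γ a b : prv Γ (Fimp a b) -> prv Γ a -> prv Γ b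
| P_falE Γ a : prv Γ Ffal -> prv Γ a
| P_andI Γ a b : prv Γ a -> prv Γ b -> prv Γ (Fand a b)
| P_andE1 Γ a b : prv Γ (Fand a b) -> prv Γ a
| P_andE2 Γ a b : prv Γ (Fand a b) -> prv Γ b
| P_orI1 Γ a b : prv Γ a -> prv Γ (For a b)
| P_orI2 Γ a b : prv Γ b -> prv Γ (For a b)
| P_orE Γ a b c : prv Γ (For a b) -> prv (a :: Γ) c -> prv (b :: Γ) c -> prv Γ c
| P_allI Γ a : prv (map shift_form Γ) a -> prv Γ (Fall a)
| P_allE Γ a t : prv Γ (Fall a) -> prv Γ (inst a t)
| P_exI Γ a t : prv Γ (inst a t) -> prv Γ (Fex a)
| P_exE Γ a c : prv Γ (Fex a) -> prv (a :: map shift_form Γ) (shift_form c) -> prv Γ c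
| P_peirce Γ a b : prv Γ (Fimp (Fimp (Fimp a b) a) a)
| P_eqrefl Γ t : prv Γ (Feq t t)
| P_eqelim Γ a s t : prv Γ (Feq s t) -> prv Γ (inst a s) -> prv Γ (inst a t).

Definition provable (Ax : form -> Prop) (phi : form) : Prop :=
  exists Γ : list form, (forall psi, In psi Γ -> Ax psi) /\ prv Γ phi.

Fixpoint alls (k : nat) (phi : form) : form :=
  match k with 0 => phi | S k' => Fall (alls k' phi) end.

Definition univ_closure (psi chi : form) : Prop :=
  exists k, chi = alls k psi /\ closed chi.

Definition sk_args (phi : form) : list term := map tvar (fvs (Fex phi)).

Definition SkEx_ax (phi : form) : form :=
  Fimp (Fex phi) (inst phi (tapp (SkEx phi) (sk_args phi))).
Definition SkAll_ax (phi : form) : form :=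
  Fimp (inst phi (tapp (SkAll phi) (map tvar (fvs (Fall phi))))) (Fall phi).

Definition SA (L : PR -> Prop) (chi : form) : Prop :=
  exists phi, skw_formula L phi /\
    (univ_closure (SkEx_ax phi) chi \/ univ_closure (SkAll_ax phi) chi).

Definition ind_ax (phi : form) : form :=
  Fimp (Fand (inst phi tzero)
             (Fall (Fimp phi (subst_form (scons (tsucc (tvar 0)) (fun n => tvar (S n))) phi))))
       (Fall phi).

Definition IND (Lf : form -> Prop) (chi : form) : Prop :=
  exists phi, Lf phi /\ univ_closure (ind_ax phi) chi.

(** Expand the standard model N to the full Skolem language sk^omega(L) by
    interpreting every Skolem symbol through a choice function: s_{exists x phi}
    picks a witness of phi and s_{forall x phi} a counterexample to phi whenever
    one exists.  In this expansion every Skolem axiom holds, every induction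
    axiom holds (whatever the formula, the domain is still N), and so do the
    axioms of T, since the expansion agrees with N on L-formulas.  Natural
    deduction is sound, so every L-sentence derivable from these axioms is true
    in the expansion, hence in N. *)

From Stdlib Require Import List Arith Lia ClassicalEpsilon Classical FunctionalExtensionality.
Import ListNotations.

Fixpoint env_of (l vs : list nat) (n : nat) : nat :=
  match l, vs with
  | k :: l', v :: vs' => if Nat.eqb n k then v else env_of l' vs' n
  | _, _ => 0
  end.

Lemma env_of_map rho l n : In n l -> env_of l (map rho l) n = rho n.
Proof.
  induction l as [|k l IH]; simpl; [tauto|]. intros [<-|Hn].
  - now rewrite Nat.eqb_refl.
  - destruct (Nat.eqb_spec n k); subst; auto.
Qed.

Lemma in_canon n l : In n l -> In n (canon l).
Proof.
  intros Hn; unfold canon; apply filter_In; split.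
  - apply in_seq. enough (n <= list_max l) by lia.
    exact (proj1 (Forall_forall _ l) (proj1 (list_max_le l _) (le_n _)) n Hn).
  - apply existsb_exists. exists n; split; [exact Hn|apply Nat.eqb_refl].
Qed.

Lemma in_fv_binder a n : In (S n) (fv_form a) -> In n (fv_form (Fall a)).
Proof. intros Hn; change n with (pred (S n)); apply in_map, filter_In; auto. Qed.

Fixpoint term_nested_ind (P : term -> Prop) (Hvar : forall n, P (tvar n))
  (Happ : forall f args, Forall P args -> P (tapp f args)) (t : term) : P t :=
  match t with
  | tvar n => Hvar n
  | tapp f args => Happ f args
      ((fix go (l : list term) : Forall P l :=
          match l with
          | nil => Forall_nil _
          | u :: l' => Forall_cons _ (term_nested_ind P Hvar Happ u) (go l')
          end) args)
  end.

(* The arguments of a Skolem symbol for [Q x phi] are bound to the free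
   variables [fvs (Q x phi)] in increasing order, matching [sk_args]. *)
Fixpoint sk_eval (rho : nat -> nat) (t : term) {struct t} : nat :=
  match t with
  | tvar n => rho n
  | tapp f args =>
      match f with
      | Base c => pr_eval c (map (sk_eval rho) args)
      | SkEx phi => epsilon (inhabits 0)
          (fun x => sk_sat (ncons x (env_of (fvs (Fex phi)) (map (sk_eval rho) args))) phi)
      | SkAll phi => epsilon (inhabits 0)
          (fun x => ~ sk_sat (ncons x (env_of (fvs (Fall phi)) (map (sk_eval rho) args))) phi)
      end
  end
with sk_sat (rho : nat -> nat) (phi : form) {struct phi} : Prop :=
  match phi with
  | Ffal => False
  | Feq s t => sk_eval rho s = sk_eval rho t
  | Fimp a b => sk_sat rho a -> sk_sat rho b
  | Fand a b => sk_sat rho a /\ sk_sat rho b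
  | For a b => sk_sat rho a \/ sk_sat rho b
  | Fall a => forall x : nat, sk_sat (ncons x rho) a
  | Fex a => exists x : nat, sk_sat (ncons x rho) a
  end.

Lemma sk_eval_tapp rho1 rho2 f args1 args2 :
  map (sk_eval rho1) args1 = map (sk_eval rho2) args2 ->
  sk_eval rho1 (tapp f args1) = sk_eval rho2 (tapp f args2).
Proof. intros Hargs; destruct f; simpl; now rewrite Hargs. Qed.

Lemma sk_eval_subst rho sg t :
  sk_eval rho (subst_term sg t) = sk_eval (fun n => sk_eval rho (sg n)) t.
Proof.
  induction t as [n|f args IH] using term_nested_ind; [reflexivity|].
  apply sk_eval_tapp. rewrite map_map.
  induction IH; simpl; f_equal; auto.
Qed.

Lemma sk_eval_up rho sg x :
  (fun n => sk_eval (ncons x rho) (up sg n)) = ncons x (fun n => sk_eval rho (sg n)).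
Proof.
  apply functional_extensionality; intros [|n]; [reflexivity|].
  unfold up, shift_term; now rewrite sk_eval_subst.
Qed.

Lemma sk_sat_subst phi : forall rho sg,
  sk_sat rho (subst_form sg phi) <-> sk_sat (fun n => sk_eval rho (sg n)) phi.
Proof.
  induction phi; intros rho sg; simpl; try tauto.
  1: now rewrite !sk_eval_subst.
  1-3: now rewrite IHphi1, IHphi2.
  all: now setoid_rewrite IHphi; setoid_rewrite sk_eval_up.
Qed.

Lemma sk_sat_inst rho phi t : sk_sat rho (inst phi t) <-> sk_sat (ncons (sk_eval rho t) rho) phi.
Proof.
  unfold inst; rewrite sk_sat_subst.
  replace (fun n => sk_eval rho (scons t tvar n)) with (ncons (sk_eval rho t) rho); [tauto|].
  apply functional_extensionality; now intros [|n].
Qed.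

Lemma sk_sat_shift rho x phi : sk_sat (ncons x rho) (shift_form phi) <-> sk_sat rho phi.
Proof. unfold shift_form; now rewrite sk_sat_subst. Qed.

Lemma sk_eval_agree t : forall rho1 rho2,
  (forall n, In n (fv_term t) -> rho1 n = rho2 n) -> sk_eval rho1 t = sk_eval rho2 t.
Proof.
  induction t as [n|f args IH] using term_nested_ind; intros rho1 rho2 Hagree.
  - apply Hagree; now left.
  - apply sk_eval_tapp. simpl in Hagree. induction IH as [|u args Hu _ IHargs]; simpl; [reflexivity|].
    f_equal; [apply Hu|apply IHargs]; intros n Hn; apply Hagree, in_or_app; auto.
Qed.

Lemma sk_sat_agree phi : forall rho1 rho2,
  (forall n, In n (fv_form phi) -> rho1 n = rho2 n) -> (sk_sat rho1 phi <-> sk_sat rho2 phi).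
Proof.
  assert (Hbinder : forall a rho1 rho2,
    (forall n, In n (fv_form (Fall a)) -> rho1 n = rho2 n) ->
    forall x n, In n (fv_form a) -> ncons x rho1 n = ncons x rho2 n).
  { intros a rho1 rho2 Hagree x [|n] Hn; [reflexivity|]. now apply Hagree, in_fv_binder. }
  induction phi; intros rho1 rho2 Hagree; simpl; try tauto.
  1: rewrite (sk_eval_agree t rho1 rho2), (sk_eval_agree t0 rho1 rho2); [tauto| |];
      intros n Hn; apply Hagree, in_or_app; auto.
  1-3: rewrite (IHphi1 rho1 rho2), (IHphi2 rho1 rho2); [tauto| |];
      intros n Hn; apply Hagree, in_or_app; auto.
  all: now setoid_rewrite (fun x => IHphi _ _ (Hbinder phi rho1 rho2 Hagree x)).
Qed.

Lemma sk_sat_shift_ctx rho x Γ :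
  (forall psi, In psi Γ -> sk_sat rho psi) ->
  forall psi, In psi (map shift_form Γ) -> sk_sat (ncons x rho) psi.
Proof.
  intros HΓ psi Hpsi. apply in_map_iff in Hpsi as [psi' [<- Hpsi']].
  now apply sk_sat_shift, HΓ.
Qed.

Lemma prv_sound Γ phi :
  prv Γ phi -> forall rho, (forall psi, In psi Γ -> sk_sat rho psi) -> sk_sat rho phi.
Proof.
  induction 1 as [| Γ a b _ IH | | | | | | | | Γ a b c _ IH1 _ IH2 _ IH3 | Γ a _ IH | Γ a t _ IH
    | Γ a t _ IH | Γ a c _ IH1 _ IH2 | Γ a b | | Γ a s t _ IH1 _ IH2];
    intros rho HΓ; simpl in *; try solve [firstorder].
  - intros Ha; apply IH; intros psi [<-|Hpsi]; auto.
  - destruct (IH1 rho HΓ) as [Ha|Hb]; [apply IH2|apply IH3]; intros psi [<-|Hpsi]; auto.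
  - intros x; apply IH, sk_sat_shift_ctx, HΓ.
  - apply sk_sat_inst, IH, HΓ.
  - exists (sk_eval rho t); apply sk_sat_inst, IH, HΓ.
  - destruct (IH1 rho HΓ) as [x Hx].
    apply (sk_sat_shift rho x), IH2. intros psi [<-|Hpsi]; [exact Hx|].
    exact (sk_sat_shift_ctx rho x Γ HΓ psi Hpsi).
  - intros Hpeirce; destruct (classic (sk_sat rho a)); auto.
    apply Hpeirce; intros; contradiction.
  - apply sk_sat_inst. rewrite <- (IH1 rho HΓ). apply sk_sat_inst, IH2, HΓ.
Qed.

Lemma alls_valid k psi : (forall rho, sk_sat rho psi) -> forall rho, sk_sat rho (alls k psi).
Proof. induction k; simpl; auto. Qed.

(* [fv_form (Fall phi)] and [fv_form (Fex phi)] are convertible, so this also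
   serves the symbols [SkAll phi]. *)
Lemma sk_sat_skolem_env rho phi x :
  sk_sat (ncons x (env_of (fvs (Fex phi)) (map rho (fvs (Fex phi))))) phi <->
  sk_sat (ncons x rho) phi.
Proof.
  apply sk_sat_agree. intros [|n] Hn; [reflexivity|].
  cbn [ncons]; now apply env_of_map, in_canon, in_fv_binder.
Qed.

Lemma sk_eval_tvars rho l : map (sk_eval rho) (map tvar l) = map rho l.
Proof. now rewrite map_map. Qed.

Lemma SkEx_ax_valid phi rho : sk_sat rho (SkEx_ax phi).
Proof.
  intros [x Hx]. apply sk_sat_inst.
  simpl; unfold sk_args; rewrite sk_eval_tvars, <- sk_sat_skolem_env.
  apply epsilon_spec. exists x. now apply sk_sat_skolem_env.
Qed.

Lemma SkAll_ax_valid phi rho : sk_sat rho (SkAll_ax phi).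
Proof.
  intros Hsk x. apply sk_sat_inst in Hsk.
  simpl in Hsk; rewrite sk_eval_tvars in Hsk.
  change (fvs (Fall phi)) with (fvs (Fex phi)) in Hsk.
  apply NNPP; intros Hx.
  refine (epsilon_spec (inhabits 0)
    (fun y => ~ sk_sat (ncons y (env_of (fvs (Fex phi)) (map rho (fvs (Fex phi))))) phi)
    _ _); [exists x|]; now rewrite sk_sat_skolem_env.
Qed.

Lemma ind_ax_valid phi rho : sk_sat rho (ind_ax phi).
Proof.
  intros [Hzero Hsucc]. apply sk_sat_inst in Hzero.
  intros x; induction x as [|x IHx]; [exact Hzero|].
  specialize (Hsucc x IHx). apply sk_sat_subst in Hsucc.
  replace (ncons (S x) rho)
    with (fun n => sk_eval (ncons x rho) (scons (tsucc (tvar 0)) (fun m => tvar (S m)) n));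
    [exact Hsucc|].
  apply functional_extensionality; now intros [|n].
Qed.

Lemma sk_eval_L_term L t : wf_term false L t -> forall rho, sk_eval rho t = eval_term rho t.
Proof.
  induction t as [n|f args IH] using term_nested_ind; intros Hwf rho; [reflexivity|].
  destruct Hwf as [Hf [_ Hargs]].
  destruct f as [c|phi|phi]; [|now destruct Hf..].
  simpl; f_equal. induction IH as [|u args Hu _ IHargs]; simpl; [reflexivity|].
  destruct Hargs; f_equal; auto.
Qed.

Lemma sk_sat_L_formula L phi : L_formula L phi -> forall rho, sk_sat rho phi <-> sat rho phi.
Proof.
  induction phi; simpl; intros Hwf rho; try tauto.
  1: destruct Hwf; now rewrite (sk_eval_L_term L t), (sk_eval_L_term L t0).
  1-3: destruct Hwf; now rewrite IHphi1, IHphi2.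
  all: now setoid_rewrite (IHphi Hwf).
Qed.

Theorem proposition7 (L : PR -> Prop) (T : form -> Prop) :
  arith_lang L ->
  (forall phi, T phi -> L_sentence L phi) ->
  sound T ->
  forall phi : form,
    L_sentence L phi ->
    provable (fun psi => SA L psi \/ T psi \/ IND (skw_formula L) psi) phi ->
    Tr L phi.
Proof.
  intros _ HT Hsound phi Hphi [Γ [HΓ Hprv]]. split; [exact Hphi|].
  apply (sk_sat_L_formula L phi (proj1 Hphi)).
  apply (prv_sound Γ phi Hprv). intros psi Hpsi.
  destruct (HΓ psi Hpsi)
    as [[a [_ [[k [-> _]]|[k [-> _]]]]] | [Ht | [a [_ [k [-> _]]]]]].
  - apply alls_valid; intros; apply SkEx_ax_valid.
  - apply alls_valid; intros; apply SkAll_ax_valid.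
  - apply (sk_sat_L_formula L psi (proj1 (HT psi Ht))), Hsound, Ht.
  - apply alls_valid; intros; apply ind_ax_valid.
Qed.
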